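(* Let $R$ be a proper normed discrete principal ideal domain and let $M$ be a Polish $R$-module. Then exactly one of the following holds: (1) $M$ is countable; (2) there is a prime ideal $\mathfrak p\triangleleft R$ such that $\ell^1(R/\mathfrak p)\sqsubseteq^R M$. Moreover, for distinct prime ideals $\mathfrak p\ne\mathfrak q$ of $R$, $\ell^1(R/\mathfrak p)\not\sqsubseteq^R\ell^1(R/\mathfrak q)$.
   Context: A norm on a ring $R$ is a function $|\cdot|\colon R\to[0,\infty)$ such that $(a,b)\mapsto|a-b|$ is a metric and $|rs|\le|r||s|$; it is proper if every closed ball is compact. Prime ideals are proper (the zero ideal is prime since $R$ is an integral domain). $R/\mathfrak p$ carries the quotient norm $|r+\mathfrak p|=\min_{s\in r+\mathfrak p}|s|$. A Polish $R$-module is a topological left $R$-module with Polish topology. $M\sqsubseteq^R N$ means there is a continuous $R$-linear injection $M\to N$. For a proper normed ring $S$, $\ell^1(S)=\{(s_k)_{k\in\mathbb N}\in S^{\mathbb N}:\sum_k|s_k|/k!<\infty\}$ with norm $\sum_k|s_k|/k!$, an $R$-module via $R\to S$. *)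

From HB Require Import structures.
From mathcomp Require Import all_boot all_order all_algebra.
From mathcomp Require Import Rstruct.
From Stdlib Require Import ClassicalEpsilon.

Set Implicit Arguments.
Unset Strict Implicit.
Unset Printing Implicit Defensive.

Import Order.TTheory GRing.Theory Num.Theory.
Local Open Scope ring_scope.

Notation Real := Rdefinitions.R.

Definition series_to (u : nat -> Real) (l : Real) : Prop :=
  forall eps : Real, 0 < eps -> exists N : nat, forall n : nat, (N <= n)%N ->
    `| \sum_(0 <= k < n) u k - l | < eps.

Definition summable (u : nat -> Real) : Prop := exists l, series_to u l.

(** The sum of a series (meaningful when [summable u]). *)
Definition series_sum (u : nat -> Real) : Real :=
  epsilon (inhabits (0 : Real)) (fun l => series_to u l).

Section Ring.
Variable R : idomainType.

(** [N] is a norm: (a,b) |-> N(a-b) is a metric, and N is submultiplicative. *)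
Definition is_norm (N : R -> Real) : Prop :=
  [/\ forall a, 0 <= N a,
      forall a b, N (a - b) = 0 <-> a = b,
      forall a b, N (a - b) = N (b - a),
      forall a b c, N (a - c) <= N (a - b) + N (b - c)
    & forall r s, N (r * s) <= N r * N s].

Definition ring_conv (N : R -> Real) (u : nat -> R) (x : R) : Prop :=
  forall eps : Real, 0 < eps -> exists K : nat, forall n, (K <= n)%N ->
    N (u n - x) < eps.

(** Compactness of a subset of the metric space (R, N(_-_)), expressed as
    sequential compactness (equivalent for metric spaces). *)
Definition ring_compact (N : R -> Real) (B : R -> Prop) : Prop :=
  forall u : nat -> R, (forall n, B (u n)) ->
    exists (phi : nat -> nat) (x : R),
      (forall n, (phi n < phi n.+1)%N) /\ B x /\ ring_conv N (fun n => u (phi n)) x.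

Definition norm_proper (N : R -> Real) : Prop :=
  forall (x : R) (r : Real), ring_compact N (fun y => N (y - x) <= r).

Definition norm_discrete (N : R -> Real) : Prop :=
  forall x : R, exists2 e : Real, 0 < e & forall y, N (y - x) < e -> y = x.

Definition is_ideal (I : R -> Prop) : Prop :=
  [/\ I 0, forall a b, I a -> I b -> I (a + b) & forall r a, I a -> I (r * a)].

Definition is_principal_ideal_domain : Prop :=
  forall I : R -> Prop, is_ideal I ->
    exists a : R, forall x, I x <-> exists r, x = r * a.

Definition is_prime_ideal (P : R -> Prop) : Prop :=
  [/\ is_ideal P, ~ P 1 & forall a b, P (a * b) -> P a \/ P b].

(** Quotient norm on R/P, computed on a representative:
    |r + P| = min_{s in r + P} N s.  (The minimum exists for proper N.) *)
Definition quot_norm (N : R -> Real) (P : R -> Prop) (r : R) : Real :=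
  epsilon (inhabits (0 : Real))
    (fun v => (exists s, P (s - r) /\ N s = v) /\
              (forall s, P (s - r) -> v <= N s)).

(** * The space l^1(R/P), represented by sequences of representatives.
    A sequence s : nat -> R represents the element (s_k + P)_k of (R/P)^N. *)

Definition l1_weight (N : R -> Real) (P : R -> Prop) (s : nat -> R) : nat -> Real :=
  fun k => quot_norm N P (s k) / (k`!)%:R.

Definition in_l1 (N : R -> Real) (P : R -> Prop) (s : nat -> R) : Prop :=
  summable (l1_weight N P s).

Definition l1_dist (N : R -> Real) (P : R -> Prop) (s t : nat -> R) : Real :=
  series_sum (l1_weight N P (fun k => s k - t k)).

Definition eqmod_seq (P : R -> Prop) (s t : nat -> R) : Prop :=
  forall k, P (s k - t k).

(** [l1(R/P) ⊑^R X]: there is a continuous R-linear injection from l^1(R/P)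
    into a target X, where the target is presented as: a carrier [X], a
    domain predicate [inX], an equality [eqX] (equality of represented
    elements), addition, scalar multiplication and a (pseudo)metric [dX].
    The map is given on representatives and is required to be well defined,
    i.e. [eqX (f s) (f t) <-> s, t represent the same element]. *)
Definition l1_embeds (N : R -> Real) (P : R -> Prop)
    (X : Type) (inX : X -> Prop) (eqX : X -> X -> Prop)
    (addX : X -> X -> X) (scaleX : R -> X -> X) (dX : X -> X -> Real) : Prop :=
  exists f : (nat -> R) -> X,
    [/\ forall s, in_l1 N P s -> inX (f s),
        forall (r : R) s t, in_l1 N P s -> in_l1 N P t ->
          eqX (f (fun k => r * s k + t k)) (addX (scaleX r (f s)) (f t)),
        forall s t, in_l1 N P s -> in_l1 N P t ->
          (eqX (f s) (f t) <-> eqmod_seq P s t)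
      & forall s, in_l1 N P s -> forall eps : Real, 0 < eps ->
          exists2 delta : Real, 0 < delta & forall t, in_l1 N P t ->
            l1_dist N P s t < delta -> dX (f s) (f t) < eps].

Definition l1_embeds_l1 (N : R -> Real) (P Q : R -> Prop) : Prop :=
  l1_embeds N P (in_l1 N Q) (eqmod_seq Q)
    (fun s t k => s k + t k) (fun r s k => r * s k) (l1_dist N Q).

Section Module.
Variable M : lmodType R.

Definition is_metric (d : M -> M -> Real) : Prop :=
  [/\ forall x y, 0 <= d x y,
      forall x y, d x y = 0 <-> x = y,
      forall x y, d x y = d y x
    & forall x y z, d x z <= d x y + d y z].

Definition metric_complete (d : M -> M -> Real) : Prop :=
  forall u : nat -> M,
    (forall eps : Real, 0 < eps -> exists K : nat, forall m n,
        (K <= m)%N -> (K <= n)%N -> d (u m) (u n) < eps) ->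
    exists x : M, forall eps : Real, 0 < eps -> exists K : nat, forall n,
        (K <= n)%N -> d (u n) x < eps.

Definition metric_separable (d : M -> M -> Real) : Prop :=
  exists D : nat -> M, forall (x : M) (eps : Real), 0 < eps ->
    exists n, d x (D n) < eps.

Definition polish_module (N : R -> Real) (d : M -> M -> Real) : Prop :=
  [/\ is_metric d, metric_complete d, metric_separable d,
      forall (x y : M) (eps : Real), 0 < eps -> exists2 delta : Real, 0 < delta &
        forall x' y', d x x' < delta -> d y y' < delta -> d (x + y) (x' + y') < eps
    &
      forall (r : R) (x : M) (eps : Real), 0 < eps -> exists2 delta : Real, 0 < delta &
        forall r' x', N (r - r') < delta -> d x x' < delta ->
          d (r *: x) (r' *: x') < eps].

Definition countable_type (T : Type) : Prop :=
  exists f : nat -> T, forall x : T, exists n, f n = x.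

End Module.
End Ring.

From mathcomp Require Import all_boot all_order all_algebra.
From mathcomp Require Import Rstruct lra ring.
From Stdlib Require Import ClassicalEpsilon Classical FunctionalExtensionality.
From Stdlib Require Rseries SeqProp.

Set Implicit Arguments.
Unset Strict Implicit.
Unset Printing Implicit Defensive.
Import Order.TTheory GRing.Theory Num.Theory.
Local Open Scope ring_scope.

(** - Exclusivity.  l^1(R/P) contains the uncountably many pairwise
      incongruent 0/1-sequences, so it admits no injection into a countable M.
    - Distinct primes.  For an R-linear injection f : l^1(R/P) -> l^1(R/Q),
      comparing f(x e_0) with x f(e_0) gives Q <= P and, Q being prime, P <= Q.
    - Dichotomy.  Balls of R are finite, so R is countable and quotient norms
      are attained by least-norm representatives.  If M is uncountable, the
      chain condition of the PID yields an ideal P maximal among those with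
      uncountable annihilator M[P]; P is prime and the fibres of m |-> r m on
      M[P] (r notin P) are countable.  Using condensation in the separable
      metric of M we choose m_K in M[P] and radii eps_K such that the sums
      S_K(u) = \sum_(k<K) u_k m_k with small coefficients are separated,
      barely moved by the next term, and independent modulo P; then
      s |-> lim_K S_K(least representatives of s) embeds l^1(R/P) into M. *)

Section NonnegativeSeries.
Variable u : nat -> Real.
Hypothesis u_ge0 : forall k, 0 <= u k.

Lemma psum_mono n m : (n <= m)%N ->
  \sum_(0 <= k < n) u k <= \sum_(0 <= k < m) u k.
Proof.
move=> /subnKC <-; elim: (m - n)%N => [|j IH]; first by rewrite addn0.
rewrite addnS big_nat_recr //= ?leq_addr //.
by apply: le_trans IH _; rewrite lerDl.
Qed.

(* Monotone convergence of the partial sums (Stdlib's [growing_cv]). *)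
Lemma summable_bounded (B : Real) :
  (forall n, \sum_(0 <= k < n) u k <= B) -> summable u.
Proof.
move=> uB.
have growing : Rseries.Un_growing (fun n => \sum_(0 <= k < n) u k).
  by move=> n; apply/RleP; apply: psum_mono.
have bounded : SeqProp.has_ub (fun n => \sum_(0 <= k < n) u k).
  by exists B => x [i ->]; apply/RleP; exact: uB.
have [l hl] := SeqProp.growing_cv _ growing bounded.
exists l => eps /RltP eps0; have [K HK] := hl eps eps0.
by exists K => n Kn; apply/RltP; exact: HK n (ssrnat.leP Kn).
Qed.

Lemma psum_le_series_sum : summable u ->
  forall n, \sum_(0 <= k < n) u k <= series_sum u.
Proof.
move=> su n; have ul : series_to u (series_sum u) by exact: epsilon_spec.
rewrite leNgt; apply/negP => hlt.
have [K HK] := ul (\sum_(0 <= k < n) u k - series_sum u) (ltac:(by rewrite subr_gt0)).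
have := HK (maxn n K) (leq_maxr _ _); have := psum_mono (leq_maxl n K).
by rewrite ltr_norml => ? /andP[_ ?]; lra.
Qed.

Lemma term_le_series_sum : summable u -> forall k, u k <= series_sum u.
Proof.
move=> su k; apply: le_trans (psum_le_series_sum su k.+1).
by rewrite big_nat_recr //= lerDr; apply: sumr_ge0 => i _; exact: u_ge0.
Qed.

End NonnegativeSeries.

Lemma le_add_eps (a b : Real) : (forall eta, 0 < eta -> a <= b + eta) -> a <= b.
Proof.
move=> h; rewrite leNgt; apply/negP => ab.
by have := h ((a - b) / 2); rewrite divr_gt0 ?subr_gt0 // => /(_ isT); lra.
Qed.

(** Factorials: monotonicity and the bound [\sum_k 1/k! <= 3], used to see
    that bounded sequences belong to l^1. *)

Lemma fact_mono k K : (k <= K)%N -> (k`! <= K`!)%N.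
Proof.
move=> /subnKC <-; elim: (K - k)%N => [|j IH]; first by rewrite addn0.
by rewrite addnS factS; apply: leq_trans IH _; apply: leq_pmull.
Qed.

Lemma fact_gt0R k : 0 < (k`!)%:R :> Real.
Proof. by rewrite ltr0n fact_gt0. Qed.

Lemma exp2_le_fact n : (2 ^ n <= n.+1`!)%N.
Proof. by elim: n => // n IH; rewrite expnS factS; apply: leq_mul. Qed.

Lemma sum_inv_fact_le3 n : \sum_(0 <= k < n) ((k`!)%:R : Real)^-1 <= 3.
Proof.
suff bound m : \sum_(0 <= k < m.+1) ((k`!)%:R : Real)^-1 <= 3 - 2 / 2 ^+ m.
  case: n => [|n]; first by rewrite big_geq //; lra.
  by apply: le_trans (bound n) _; rewrite lerBlDr lerDl divr_ge0 // exprn_ge0.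
elim: m => [|m IH]; first by rewrite big_nat1 /= expr0 invr1; lra.
rewrite big_nat_recr //=; apply: le_trans (lerD IH (lexx _)) _.
have inv_fact : ((m.+1)`!)%:R^-1 <= (2 ^+ m : Real)^-1.
  by rewrite lef_pV2 ?posrE ?exprn_gt0 ?fact_gt0R // -natrX ler_nat exp2_le_fact.
rewrite exprS invfM; set x := (2 ^+ m : Real)^-1 in inv_fact *.
suff : 3 - 2 * x + x = 3 - 2 * (2^-1 * x) by move=> <-; lra.
by rewrite mulrA divff // ?mul1r; lra.
Qed.

Definition countable_set (T : Type) (A : T -> Prop) : Prop :=
  exists g : nat -> T, forall x, A x -> exists n, g n = x.

Definition decode (T : countType) (x0 : T) (n : nat) : T := odflt x0 (unpickle n).

Lemma decodeK (T : countType) (x0 x : T) : decode x0 (pickle x) = x.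
Proof. by rewrite /decode pickleK. Qed.

Lemma countable_set_sub (T : Type) (A B : T -> Prop) :
  (forall x, A x -> B x) -> countable_set B -> countable_set A.
Proof. by move=> AB [g hg]; exists g => x /AB /hg. Qed.

Lemma countable_bigcup (T : Type) (I : countType) (i0 : I) (A : T -> Prop)
    (B : I -> T -> Prop) :
  (forall i, countable_set (B i)) -> (forall x, A x -> exists i, B i x) ->
  countable_set A.
Proof.
move=> hB hA.
have [g hg] := choice (fun i (g : nat -> T) => forall x, B i x -> exists j, g j = x) hB.
exists (fun q => g (decode (i0, 0%N) q).1 (decode (i0, 0%N) q).2) => x /hA [i /hg [j <-]].
by exists (pickle (i, j)); rewrite decodeK.
Qed.

Lemma countable_image2 (T : Type) (A : T -> Prop) (f : nat -> nat -> T) :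
  (forall x, A x -> exists i j, f i j = x) -> countable_set A.
Proof.
move=> hA; apply: (countable_bigcup 0%N (B := fun i x => exists j, f i j = x)) => //.
by move=> i; exists (f i).
Qed.

Section IdealFacts.
Variables (R : idomainType) (P : R -> Prop).
Hypothesis hP : is_ideal P.

Lemma ideal0 : P 0. Proof. by case: hP. Qed.
Lemma idealD a b : P a -> P b -> P (a + b). Proof. by case: hP => _ h _; apply: h. Qed.
Lemma idealMl r a : P a -> P (r * a). Proof. by case: hP => _ _ h; apply: h. Qed.
Lemma idealMr r a : P a -> P (a * r). Proof. by rewrite mulrC; apply: idealMl. Qed.
Lemma idealN a : P a -> P (- a). Proof. by move/(idealMl (-1)); rewrite mulN1r. Qed.
Lemma idealB a b : P a -> P b -> P (a - b). Proof. by move=> ha /idealN; apply: idealD. Qed.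

End IdealFacts.

Section NormFacts.
Variables (R : idomainType) (N : R -> Real).
Hypothesis hN : is_norm N.

Lemma norm_ge0 x : 0 <= N x. Proof. by case: hN. Qed.
Lemma norm0 : N 0 = 0.
Proof. by case: hN => _ h _ _ _; have := (h 0 0).2 erefl; rewrite subrr. Qed.
Lemma normN x : N (- x) = N x.
Proof. by case: hN => _ _ h _ _; have := h 0 x; rewrite sub0r subr0. Qed.
Lemma normD a b : N (a + b) <= N a + N b.
Proof. by case: hN => _ _ _ h _; have := h a 0 (- b); rewrite opprK subr0 add0r. Qed.

End NormFacts.

(** * Proper discrete norms
    Under a proper discrete norm every closed ball is compact and discrete,
    hence finite.  Consequently R is countable and the quotient norm
    |r + P| is attained by some representative of r + P. *)
Definition proper_discrete_norm (R : idomainType) (N : R -> Real) : Prop :=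
  [/\ is_norm N, norm_proper N & norm_discrete N].

Section ProperDiscreteNorm.
Variables (R : idomainType) (N : R -> Real).
Hypothesis hND : proper_discrete_norm N.
Let hN : is_norm N. Proof. by case: hND. Qed.
Let hprop : norm_proper N. Proof. by case: hND. Qed.
Let hdisc : norm_discrete N. Proof. by case: hND. Qed.

(* An infinite ball would contain an injective sequence; a convergent
   subsequence of it is eventually constant by discreteness, which is absurd. *)
Lemma norm_ball_finite (L : Real) : exists l : seq R, forall y, N y <= L -> y \in l.
Proof.
apply: NNPP => nofin.
have fresh (l : seq R) : exists y, N y <= L /\ y \notin l.
  apply: NNPP => H; apply: nofin; exists l => y Hy.
  by apply: NNPP => /negP yl; apply: H; exists y.
pose next (l : seq R) := epsilon (inhabits 0) (fun y => N y <= L /\ y \notin l).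
have nextP (l : seq R) : N (next l) <= L /\ next l \notin l.
  exact: (epsilon_spec (inhabits 0) (fun y => N y <= L /\ y \notin l) (fresh l)).
pose fix prefix n := if n is n'.+1 then next (prefix n') :: prefix n' else [::].
pose u n := next (prefix n).
have u_prefix k n : (k < n)%N -> u k \in prefix n.
  elim: n => // n IH; rewrite ltnS leq_eqVlt => /orP[/eqP->|/IH h].
    by rewrite /= inE eqxx.
  by rewrite /= inE h orbT.
have u_ball n : N (u n - 0) <= L by rewrite subr0; case: (nextP (prefix n)).
have [phi [x [phi_incr [_ cv]]]] := hprop u_ball.
have [e e0 he] := hdisc x; have [K HK] := cv e e0.
have := u_prefix _ _ (phi_incr K).
rewrite (he _ (HK K (leqnn K))) -(he _ (HK K.+1 (leqnSn K))).
by case: (nextP (prefix (phi K.+1))) => _ /negP.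
Qed.

Definition ball_seq (L : Real) : seq R :=
  epsilon (inhabits [::]) (fun l => forall y, N y <= L -> y \in l).

Lemma ball_seqP L y : N y <= L -> y \in ball_seq L.
Proof.
by move: y; apply: (epsilon_spec (inhabits [::]) (fun l => forall y, N y <= L -> y \in l));
  exact: norm_ball_finite.
Qed.

(* An enumeration of R: ring element with index [pickle (n, i)] is the
   [i]-th element of the ball of radius [n]. *)
Definition ring_enum (p : nat) : R :=
  nth 0 (ball_seq (decode (0, 0)%N p).1%:R) (decode (0, 0)%N p).2.

Lemma ring_enum_surj y : exists p, ring_enum p = y.
Proof.
set n := Num.Def.archi_bound (N y).
exists (pickle (n, index y (ball_seq n%:R))); rewrite /ring_enum decodeK /=.
by apply/nth_index/ball_seqP/ltW/archi_boundP/(norm_ge0 hN).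
Qed.

Lemma seq_norm_argmin (l : seq R) (Q : R -> Prop) : (exists y, y \in l /\ Q y) ->
  exists y, [/\ y \in l, Q y & forall z, z \in l -> Q z -> N y <= N z].
Proof.
elim: l => [[y []] //|a l IH] [y [yin Qy]].
case: (classic (exists y, y \in l /\ Q y)) => [/IH [z [zin Qz zmin]]|nol].
  case: (classic (Q a)) => Qa; last first.
    by exists z; split; rewrite ?inE ?zin ?orbT // => w; rewrite inE => /orP[/eqP->|/zmin].
  case: (lerP (N a) (N z)) => az.
    exists a; split; rewrite ?inE ?eqxx // => w.
    by rewrite inE => /orP[/eqP->|/zmin h /h] //; apply: le_trans.
  exists z; split; rewrite ?inE ?zin ?orbT // => w.
  by rewrite inE => /orP[/eqP-> _|/zmin //]; exact: ltW.
have Qa : Q a by move: yin; rewrite inE => /orP[/eqP<-//|yl]; case: nol; exists y.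
exists a; split; rewrite ?inE ?eqxx // => w; rewrite inE => /orP[/eqP->//|wl Qw].
by case: nol; exists w.
Qed.

Section QuotientNorm.
Variable P : R -> Prop.
Hypothesis hP : is_ideal P.
Notation qn := (quot_norm N P).

(* The infimum defining the quotient norm is a minimum: a minimiser exists
   among the finitely many elements of the coset in the ball of radius N r. *)
Lemma quot_norm_attained r : (exists s, P (s - r) /\ N s = qn r) /\
  (forall s, P (s - r) -> qn r <= N s).
Proof.
apply: (epsilon_spec (inhabits 0) (fun v => (exists s, P (s - r) /\ N s = v) /\
  (forall s, P (s - r) -> v <= N s))).
have r_in : exists y, y \in ball_seq (N r) /\ P (y - r).
  by exists r; rewrite subrr; split; [exact/ball_seqP | exact: ideal0].
have [y [yin Qy ymin]] := seq_norm_argmin r_in.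
exists (N y); split; first by exists y.
move=> s Ps; case: (lerP (N s) (N r)) => sr; first exact/ymin/Ps/ball_seqP.
apply: le_trans (ltW sr); apply: ymin; first exact: ball_seqP.
by rewrite subrr; exact: ideal0.
Qed.

Lemma quot_norm_ge0 r : 0 <= qn r.
Proof. by case: (quot_norm_attained r) => [[s [_ <-]] _]; exact: (norm_ge0 hN). Qed.

Lemma quot_norm_le r : qn r <= N r.
Proof. by case: (quot_norm_attained r) => _; apply; rewrite subrr; exact: ideal0. Qed.

Lemma quot_norm0 : qn 0 = 0.
Proof. by apply/eqP; rewrite eq_le quot_norm_ge0 andbT -(norm0 hN) quot_norm_le. Qed.

Lemma quot_normD a b : qn (a + b) <= qn a + qn b.
Proof.
case: (quot_norm_attained a) => [[s [Ps <-]] _].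
case: (quot_norm_attained b) => [[t [Pt <-]] _].
case: (quot_norm_attained (a + b)) => _ h; apply: le_trans (normD hN s t); apply: h.
by have := idealD hP Ps Pt; rewrite opprD addrACA.
Qed.

Lemma quot_normN a : qn (- a) = qn a.
Proof.
suff le x : qn (- x) <= qn x by apply/eqP; rewrite eq_le le /= -{1}(opprK a) le.
case: (quot_norm_attained x) => [[s [Ps <-]] _].
case: (quot_norm_attained (- x)) => _ h; rewrite -(normN hN); apply: h.
by rewrite opprK addrC -opprB; exact: idealN.
Qed.

(* By discreteness, the quotient norm of a class other than P itself is
   bounded away from 0. *)
Lemma quot_norm_gap : exists2 e : Real, 0 < e & forall a, ~ P a -> e <= qn a.
Proof.
have [e e0 he] := hdisc 0; exists e => // a Pa.
case: (quot_norm_attained a) => [[s [Ps <-]] _]; rewrite leNgt; apply/negP => hs.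
have s0 : s = 0 by apply: he; rewrite subr0.
by apply: Pa; move: Ps; rewrite s0 sub0r => /(idealN hP); rewrite opprK.
Qed.

Definition min_rep (a : R) : R := epsilon (inhabits 0) (fun s => P (s - a) /\ N s = qn a).

Lemma min_repP a : P (min_rep a - a) /\ N (min_rep a) = qn a.
Proof.
apply: (epsilon_spec (inhabits 0) (fun s => P (s - a) /\ N s = qn a)).
by case: (quot_norm_attained a).
Qed.

Lemma min_rep_modP a b : P (a - b) -> P (min_rep a - min_rep b).
Proof.
move=> hab; have ha := (min_repP a).1; have hb := (min_repP b).1.
have -> : min_rep a - min_rep b = (min_rep a - a) - (min_rep b - b) + (a - b) by ring.
by apply: (idealD hP) => //; apply: (idealB hP).
Qed.

End QuotientNorm.
End ProperDiscreteNorm.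

Section L1.
Variables (R : idomainType) (N : R -> Real).
Hypothesis hND : proper_discrete_norm N.
Let hN : is_norm N. Proof. by case: hND. Qed.
Variable P : R -> Prop.
Hypothesis hP : is_ideal P.
Notation qn := (quot_norm N P).

Lemma l1_weight_ge0 s k : 0 <= l1_weight N P s k.
Proof. by rewrite divr_ge0 ?ler0n // (quot_norm_ge0 hND hP). Qed.

Lemma l1_coef_bound s : in_l1 N P s -> exists c : nat, forall k, qn (s k) <= c%:R * (k`!)%:R.
Proof.
move=> hs; set S := series_sum (l1_weight N P s).
have hS k : qn (s k) / (k`!)%:R <= S := term_le_series_sum (@l1_weight_ge0 s) hs k.
have S0 : 0 <= S by apply: le_trans (hS 0%N); exact: l1_weight_ge0.
exists (Num.Def.archi_bound S) => k.
by rewrite -ler_pdivrMr ?fact_gt0R //; apply: le_trans (hS k) _; exact/ltW/archi_boundP.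
Qed.

Lemma l1_sub s t : in_l1 N P s -> in_l1 N P t -> in_l1 N P (fun k => s k - t k).
Proof.
move=> hs ht; apply: (@summable_bounded _ (@l1_weight_ge0 _)
  (series_sum (l1_weight N P s) + series_sum (l1_weight N P t))) => n.
apply: le_trans (lerD (psum_le_series_sum (@l1_weight_ge0 s) hs n)
  (psum_le_series_sum (@l1_weight_ge0 t) ht n)).
rewrite -big_split /=; apply: ler_sum => k _; rewrite /l1_weight -mulrDl.
rewrite ler_wpM2r ?invr_ge0 ?ler0n // -(quot_normN hND hP (t k)).
exact: quot_normD.
Qed.

Lemma l1_finite_support s n : (forall k, (n <= k)%N -> s k = 0) -> in_l1 N P s.
Proof.
move=> hs; apply: (@summable_bounded _ (@l1_weight_ge0 _)
  (\sum_(0 <= k < n) l1_weight N P s k)) => m.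
case: (leqP m n) => mn; first by apply: psum_mono => //; exact: l1_weight_ge0.
rewrite (@big_cat_nat _ _ _ n 0 m _ _ (leq0n n) (ltnW mn)) /=.
rewrite -[X in _ <= X]addr0 lerD2l big_nat_cond big1 // => k /andP[/andP[nk _] _].
by rewrite /l1_weight hs // (quot_norm0 hND hP) mul0r.
Qed.

Lemma l1_indicator (b : nat -> bool) : in_l1 N P (fun k => (b k)%:R).
Proof.
apply: (@summable_bounded _ (@l1_weight_ge0 _) (3 * N 1)) => n.
apply: le_trans (_ : \sum_(0 <= k < n) N 1 * ((k`!)%:R)^-1 <= _).
  apply: ler_sum => k _; rewrite /l1_weight ler_wpM2r ?invr_ge0 ?ler0n //.
  case: (b k); first exact: quot_norm_le.
  by rewrite (quot_norm0 hND hP) (norm_ge0 hN).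
by rewrite -mulr_sumr mulrC ler_wpM2r ?(norm_ge0 hN) // sum_inv_fact_le3.
Qed.

End L1.

(** * l^1(R/P) does not embed into a countable module
    The 0/1-valued sequences are pairwise incongruent modulo an ideal not
    containing 1; a diagonal argument then contradicts countability. *)
Lemma l1_embeds_uncountable (R : idomainType) (N : R -> Real)
    (hND : proper_discrete_norm N) (M : lmodType R) (d : M -> M -> Real)
    (P : R -> Prop) : is_ideal P -> ~ P 1 ->
  l1_embeds N P (fun _ : M => True) (@eq M) +%R ( *:%R) d -> ~ countable_type M.
Proof.
move=> hP nP1 [f [_ _ f_inj _]] [g g_onto].
pose ind (b : nat -> bool) k : R := (b k)%:R.
pose code n := epsilon (inhabits (fun _ : nat => false)) (fun b => f (ind b) = g n).
pose diag k := ~~ code k k.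
have [n hn] := g_onto (f (ind diag)).
have code_n : f (ind (code n)) = g n.
  apply: (epsilon_spec (inhabits (fun _ : nat => false)) (fun b => f (ind b) = g n)).
  by exists diag.
have := (f_inj _ _ (l1_indicator hND hP (code n)) (l1_indicator hND hP diag)).1.
rewrite code_n hn => /(_ erefl n); rewrite /ind /diag.
by case: (code n n) => /=; rewrite ?subr0 ?sub0r // => /(idealN hP); rewrite opprK.
Qed.

(** * Distinct primes give incomparable spaces
    Let f : l^1(R/P) -> l^1(R/Q) be R-linear and injective, and let e_0 be
    the first unit sequence.  For x in R, x e_0 = 0 in l^1(R/P) iff x in P,
    while f(x e_0) = x f(e_0).  If x in Q this forces x in P; if x in P and
    x notin Q, primality of Q forces f(e_0) = 0, i.e. 1 in P.  So P = Q. *)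
Definition unit0 (R : idomainType) (k : nat) : R := if k == 0%N then 1 else 0.

Section DistinctPrimes.
Variables (R : idomainType) (N : R -> Real).
Hypothesis hND : proper_discrete_norm N.
Variables P Q : R -> Prop.
Hypotheses (hP : is_ideal P) (hQ : is_ideal Q).
Variable f : (nat -> R) -> nat -> R.
Hypothesis f_lin : forall r s t, in_l1 N P s -> in_l1 N P t ->
  eqmod_seq Q (f (fun k => r * s k + t k)) (fun k => r * f s k + f t k).
Hypothesis f_inj : forall s t, in_l1 N P s -> in_l1 N P t ->
  (eqmod_seq Q (f s) (f t) <-> eqmod_seq P s t).

Let zero : nat -> R := fun _ => 0.

Lemma l1_zero : in_l1 N P zero.
Proof. exact: (l1_finite_support hND hP (n := 0)). Qed.

Lemma l1_scaled_unit0 x : in_l1 N P (fun k => x * unit0 R k + zero k).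
Proof.
apply: (l1_finite_support hND hP (n := 1)) => -[|k] //= _.
by rewrite /unit0 /zero mulr0 addr0.
Qed.

Lemma l1_unit0 : in_l1 N P (unit0 R).
Proof. by apply: (l1_finite_support hND hP (n := 1)) => -[|k]. Qed.

Lemma embedding_scaled_unit0 x :
  eqmod_seq Q (f (fun k => x * unit0 R k + zero k)) (f zero) <-> P x.
Proof.
rewrite (f_inj (l1_scaled_unit0 x) l1_zero); split => [/(_ 0%N)|Px k].
  by rewrite /unit0 /zero /= mulr1 !addr0 subr0.
by rewrite /unit0 /zero; case: eqP => _; rewrite ?mulr1 ?mulr0 !addr0 subr0 //; exact: ideal0.
Qed.

Lemma embedding_scaled_unit0_diff x k :
  Q (f (fun k => x * unit0 R k + zero k) k - f zero k - x * f (unit0 R) k).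
Proof.
have -> : f (fun k => x * unit0 R k + zero k) k - f zero k - x * f (unit0 R) k
  = f (fun k => x * unit0 R k + zero k) k - (x * f (unit0 R) k + f zero k) by ring.
exact: f_lin l1_unit0 l1_zero k.
Qed.

(* Q <= P: for x in Q, f(x e_0) - f(0) lies in Q, so x e_0 = 0 modulo P. *)
Lemma embedding_ideal_sub x : Q x -> P x.
Proof.
move=> Qx; apply/embedding_scaled_unit0 => k.
have -> : f (fun k => x * unit0 R k + zero k) k - f zero k =
  (f (fun k => x * unit0 R k + zero k) k - f zero k - x * f (unit0 R) k)
  + f (unit0 R) k * x by ring.
by apply: (idealD hQ); [exact: embedding_scaled_unit0_diff | exact: (idealMl hQ)].
Qed.

(* P <= Q when 1 notin P and Q is prime: for x in P \ Q, x f(e_0) lies in Q,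
   hence so does f(e_0), i.e. f(e_0) = f(0) and e_0 = 0 modulo P. *)
Lemma embedding_ideal_sup : ~ P 1 -> (forall a b, Q (a * b) -> Q a \/ Q b) ->
  forall x, P x -> Q x.
Proof.
move=> nP1 Qprime x Px; apply: NNPP => nQx; apply: nP1.
have f_zero k : Q (f zero k).
  have := f_lin 1 l1_zero l1_zero k.
  have -> : (fun k => 1 * zero k + zero k) = zero.
    by apply: functional_extensionality => i; rewrite /zero mul1r addr0.
  by rewrite mul1r opprD addrA subrr add0r => /(idealN hQ); rewrite opprK.
have xf k : Q (x * f (unit0 R) k).
  have := idealB hQ ((embedding_scaled_unit0 x).2 Px k) (embedding_scaled_unit0_diff x k).
  by rewrite opprB addrC subrK.
have := (f_inj l1_unit0 l1_zero).1 => /(_ _) /(_ 0%N); rewrite /unit0 /zero /= subr0.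
apply => k; apply: (idealB hQ) => //.
by case: (Qprime _ _ (xf k)).
Qed.

End DistinctPrimes.

(** * Ascending chains of ideals in a PID are stationary
    The union of the chain is principal; its generator lies in some member. *)
Lemma pid_chain_stationary (R : idomainType) : is_principal_ideal_domain R ->
  forall I : nat -> R -> Prop, (forall n, is_ideal (I n)) ->
  (forall n x, I n x -> I n.+1 x) -> exists n, forall x, I n.+1 x -> I n x.
Proof.
move=> hpid I hI incr.
have mono n m : (n <= m)%N -> forall x, I n x -> I m x.
  move=> /subnKC <-; elim: (m - n)%N => [|j IH] x; first by rewrite addn0.
  by rewrite addnS => /IH /incr.
pose U x := exists n, I n x.
have hU : is_ideal U.
  split; first by exists 0%N; exact: ideal0.
  - move=> a b [n an] [m bm]; exists (maxn n m).
    by apply: (idealD (hI _)); [apply: mono an | apply: mono bm]; rewrite ?leq_maxl ?leq_maxr.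
  - by move=> r a [n an]; exists n; exact: idealMl.
have [g hg] := hpid U hU.
have [n gn] : U g by apply/hg; exists 1; rewrite mul1r.
exists n => x Ix; have [r ->] : exists r, x = r * g by apply/hg; exists n.+1.
exact: idealMl.
Qed.

(** * The maximal ideal with uncountable annihilator
    For an ideal I write M[I] = {m | I m = 0}.  If M is uncountable, the
    ideals I with M[I] uncountable form a nonempty family (containing 0),
    which has a maximal member P by the chain condition.  Maximality makes
    M[P + Rh] countable for h notin P; hence every fibre of m |-> h m on
    M[P] is countable, and P is prime. *)
Section Annihilators.
Variables (R : idomainType) (M : lmodType R).

Definition ann (I : R -> Prop) (m : M) : Prop := forall a, I a -> a *: m = 0.

Definition ideal_add (P : R -> Prop) (h : R) (x : R) : Prop :=
  exists p r, P p /\ x = p + r * h.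

Lemma ideal_add_ideal P h : is_ideal P -> is_ideal (ideal_add P h).
Proof.
move=> hP; split.
- by exists 0, 0; rewrite mul0r addr0; split => //; exact: ideal0.
- move=> _ _ [p [r [Pp ->]]] [p' [r' [Pp' ->]]]; exists (p + p'), (r + r').
  by split; [exact: idealD | rewrite mulrDl addrACA].
- move=> s _ [p [r [Pp ->]]]; exists (s * p), (s * r).
  by split; [exact: idealMl | rewrite mulrDr mulrA].
Qed.

Definition big_ann (I : R -> Prop) : Prop := is_ideal I /\ ~ countable_set (ann I).

Definition maximal_big_ann (P : R -> Prop) : Prop := big_ann P /\
  forall J, big_ann J -> (forall x, P x -> J x) -> forall x, J x -> P x.

(* Otherwise, starting from the zero ideal and repeatedly choosing a strictly
   larger ideal with uncountable annihilator gives a non-stationary chain. *)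
Lemma maximal_big_ann_exists : is_principal_ideal_domain R ->
  ~ countable_set (fun _ : M => True) -> exists P, maximal_big_ann P.
Proof.
move=> hpid Munc; apply: NNPP => nomax.
have grow I : big_ann I ->
    exists J, big_ann J /\ (forall x, I x -> J x) /\ exists x, J x /\ ~ I x.
  move=> bigI; apply: NNPP => H; apply: nomax; exists I; split => // J bigJ IJ x Jx.
  by apply: NNPP => Ix; apply: H; exists J; split => //; split => //; exists x.
pose next I := epsilon (inhabits (fun _ : R => True))
  (fun J => big_ann J /\ (forall x, I x -> J x) /\ exists x, J x /\ ~ I x).
have nextP I : big_ann I ->
    big_ann (next I) /\ (forall x, I x -> next I x) /\ exists x, next I x /\ ~ I x.
  move=> bigI; apply: (epsilon_spec (inhabits (fun _ : R => True))
    (fun J => big_ann J /\ (forall x, I x -> J x) /\ exists x, J x /\ ~ I x)).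
  exact: grow.
pose fix chain n := if n is n'.+1 then next (chain n') else (fun x : R => x = 0).
have chain_big n : big_ann (chain n).
  elim: n => [|n IH]; last by case: (nextP _ IH).
  split; first by split=> [//|a b /= -> ->|r a /= ->]; rewrite ?addr0 ?mulr0.
  by move=> c; apply/Munc/(countable_set_sub _ c) => m _ a /= ->; exact: scale0r.
have [n hn] := pid_chain_stationary hpid (fun n => (chain_big n).1)
  (fun n => (nextP _ (chain_big n)).2.1).
by case: (nextP _ (chain_big n)) => _ [_ [x [xn nx]]]; exact: nx (hn x xn).
Qed.

(* If M[P + Rh] is countable, so is every fibre {m in M[P] | h m = y}:
   it is a translate of a subset of M[P + Rh]. *)
Lemma ann_fiber_countable P h y : countable_set (ann (ideal_add P h)) ->
  countable_set (fun m => ann P m /\ h *: m = y).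
Proof.
move=> [g hg].
case: (classic (exists m0, ann P m0 /\ h *: m0 = y)) => [[m0 [hm0 hy0]]|none]; last first.
  by exists (fun _ => 0) => m hm; case: none; exists m.
exists (fun j => m0 + g j) => m [hm hy].
have [j hj] : exists j, g j = m - m0.
  apply: hg => _ [p [r [Pp ->]]].
  by rewrite scalerDl !scalerBr hm // hm0 // subrr add0r -!scalerA hy hy0 subrr.
by exists j; rewrite hj addrC subrK.
Qed.

Section Maximal.
Variable P : R -> Prop.
Hypothesis Pmax : maximal_big_ann P.

(* By maximality, since P + Rh strictly contains P. *)
Lemma maximal_big_ann_sum h : ~ P h -> countable_set (ann (ideal_add P h)).
Proof.
case: Pmax => [[hP _] maxP] Ph; apply: NNPP => unc; apply: Ph.
apply: (maxP (ideal_add P h)) => [|x Px|]; first by split => //; exact: ideal_add_ideal.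
  by exists x, 0; rewrite mul0r addr0.
by exists 0, 1; rewrite mul1r add0r; split => //; exact: ideal0.
Qed.

(* If ab in P but a, b notin P, then M[P] is a countable union of fibres of
   m |-> a m, each countable, since a M[P] is contained in M[P + Rb]. *)
Lemma maximal_big_ann_prime : is_prime_ideal P.
Proof.
case: Pmax => [[hP Punc] _]; split => // [P1|a b Pab].
  by apply: Punc; exists (fun _ => 0) => m hm; exists 0%N; rewrite -(hm 1 P1) scale1r.
apply: NNPP => /not_or_and [na nb]; apply: Punc.
have [g hg] := maximal_big_ann_sum nb.
apply: (countable_bigcup 0%N (B := fun i m => ann P m /\ a *: m = g i)).
  by move=> i; apply: ann_fiber_countable; exact: maximal_big_ann_sum.
move=> m hm; have [i hi] : exists i, g i = a *: m.
  apply: hg => _ [p [r [Pp ->]]]; rewrite scalerA mulrDl scalerDl.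
  rewrite (hm (p * a)) ?(hm (r * b * a)) ?addr0 //; last exact: idealMr.
  by rewrite -mulrA (mulrC b a); exact: idealMl.
by exists i.
Qed.

End Maximal.
End Annihilators.

(** * Polish modules: condensation
    An uncountable subset A of a separable metric space has a point c all of
    whose neighbourhoods meet A uncountably (otherwise A is covered by
    countably many countable basic balls).  For an uncountable subgroup this
    transfers to 0 by continuity of translation. *)
Section PolishModule.
Variables (R : idomainType) (N : R -> Real) (M : lmodType R) (d : M -> M -> Real).
Hypothesis hM : polish_module N d.

Lemma dist_ge0 x y : 0 <= d x y. Proof. by case: hM => [[h _ _ _] _ _ _ _]. Qed.
Lemma dist_eq0 x y : d x y = 0 -> x = y. Proof. by case: hM => [[_ h _ _] _ _ _ _] /h. Qed.
Lemma dist_xx x : d x x = 0. Proof. by case: hM => [[_ h _ _] _ _ _ _]; apply/h. Qed.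
Lemma dist_sym x y : d x y = d y x. Proof. by case: hM => [[_ _ h _] _ _ _ _]. Qed.
Lemma dist_tri x y z : d x z <= d x y + d y z. Proof. by case: hM => [[_ _ _ h] _ _ _ _]. Qed.

Lemma condensation_point (A : M -> Prop) : ~ countable_set A ->
  exists c, A c /\ forall rho : Real, 0 < rho -> ~ countable_set (fun x => A x /\ d c x < rho).
Proof.
move=> Aunc; apply: NNPP => nocond; apply: Aunc.
have locally_countable c : A c ->
    exists2 rho : Real, 0 < rho & countable_set (fun x => A x /\ d c x < rho).
  move=> Ac; apply: NNPP => H; apply: nocond; exists c; split => // rho rho0 crho.
  by apply: H; exists rho.
case: hM => _ _ [D hD] _ _.
pose ball (q : nat * nat) x := A x /\ d (D q.1) x < (q.2.+1%:R)^-1.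
apply: (countable_bigcup (0, 0)%N (B := fun q x => countable_set (ball q) /\ ball q x)).
  move=> q; case: (classic (countable_set (ball q))) => [cq|ncq].
    by apply: (countable_set_sub _ cq) => x [].
  by exists (fun _ => 0) => x [].
move=> a Aa; have [rho rho0 arho] := locally_countable a Aa.
set j := Num.Def.archi_bound (2 / rho).
have hj : 2 / rho < j%:R by apply: archi_boundP; rewrite divr_ge0 // ltW.
have j1 : 0 < (j.+1%:R : Real) by rewrite ltr0n.
have small_radius : (j.+1%:R : Real)^-1 + (j.+1%:R)^-1 < rho.
  rewrite -(ltr_pM2r j1) mulrDl mulVf ?gt_eqF // mulrC.
  rewrite ltr_pdivrMr // in hj; apply: (@lt_le_trans _ _ (j%:R * rho)); first lra.
  by rewrite ler_pM2r // ler_nat.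
have [n hn] := hD a _ (ltac:(by rewrite invr_gt0) : 0 < (j.+1%:R : Real)^-1).
exists (n, j); split; last by split => //=; rewrite dist_sym.
apply: (countable_set_sub _ arho) => x [Ax hx]; split => //.
apply: le_lt_trans (dist_tri a (D n) x) _; exact: lt_trans (ltrD hn hx) small_radius.
Qed.

Lemma subgroup_small_uncountable (A : M -> Prop) :
  (forall x y, A x -> A y -> A (x - y)) -> ~ countable_set A ->
  forall rho : Real, 0 < rho -> ~ countable_set (fun x => A x /\ d 0 x < rho).
Proof.
move=> subgroup Aunc rho rho0 [g hg].
have [c [Ac hc]] := condensation_point Aunc.
case: hM => _ _ _ hadd _.
have [delta delta0 hdelta] := hadd c (- c) rho rho0.
apply: (hc delta delta0); exists (fun i => g i + c) => x [Ax hx].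
have [i hi] : exists i, g i = x - c.
  apply: hg; split; first exact: subgroup.
  by have := hdelta x (- c) hx; rewrite dist_xx addrN; apply.
by exists i; rewrite hi subrK.
Qed.

End PolishModule.

Lemma finite_small_pos (T : eqType) (l : seq T) (Q : T -> Real -> Prop) :
  (forall x a b, Q x a -> 0 < b -> b <= a -> Q x b) ->
  (forall x, x \in l -> exists2 a, 0 < a & Q x a) ->
  exists2 a, 0 < a & forall x, x \in l -> Q x a.
Proof.
move=> Qdown; elim: l => [_|y l IH H]; first by exists 1.
have [a a0 Ha] : exists2 a, 0 < a & forall x, x \in l -> Q x a.
  by apply: IH => x xl; apply: H; rewrite inE xl orbT.
have [b b0 Hb] : exists2 b, 0 < b & Q y b by apply: H; rewrite inE eqxx.
have ab0 : 0 < Num.min a b by rewrite lt_min a0 b0.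
exists (Num.min a b) => // x; rewrite inE => /orP[/eqP->|xl].
  by apply: Qdown Hb _ _; rewrite ?ge_min ?lexx ?orbT.
by apply: Qdown (Ha x xl) _ _; rewrite ?ge_min ?lexx.
Qed.

(** * The construction
    Fix an ideal P with M[P] uncountable and all fibres of m |-> r m
    (r notin P) on M[P] countable.  Write S_K(u) = \sum_(k<K) u_k m_k and
    call u K-bounded when N(u_k) <= K K! for k < K.  We choose m_K in M[P]
    and eps_K > 0 (eps_K <= eps_(K-1)/2) such that
    - distinct K-bounded sums S_K(u) are more than 5 eps_K apart;
    - S_K(u) + r m_K is eps_K-close to S_K(u) when N(r) <= K K!;
    - S_K(w) + r m_K <> 0 for r notin P.
    The first two use that there are finitely many K-bounded sums; the last
    one uses that the bad m form a countable set while M[P] is uncountable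
    near 0.  The map s |-> lim_K S_K(min_rep s) is then the embedding. *)
Section Construction.
Variables (R : idomainType) (N : R -> Real).
Hypothesis hND : proper_discrete_norm N.
Let hN : is_norm N. Proof. by case: hND. Qed.
Variables (M : lmodType R) (d : M -> M -> Real).
Hypothesis hM : polish_module N d.
Variable P : R -> Prop.
Hypothesis hP : is_ideal P.
Hypothesis P_unc : ~ countable_set (@ann R M P).
Hypothesis fiber_countable : forall r y, ~ P r ->
  countable_set (fun m : M => ann P m /\ r *: m = y).

Definition lincomb (m : nat -> M) K (u : nat -> R) : M := \sum_(0 <= k < K) u k *: m k.
Definition coef_bound (K : nat) : Real := (K * K`!)%:R.
Definition bounded_coefs K (u : nat -> R) := forall k, (k < K)%N -> N (u k) <= coef_bound K.

Lemma lincombS m K u : lincomb m K.+1 u = lincomb m K u + u K *: m K.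
Proof. by rewrite /lincomb big_nat_recr. Qed.

Lemma lincomb0 m u : lincomb m 0 u = 0.
Proof. by rewrite /lincomb big_geq. Qed.

Lemma lincomb_ext m1 m2 K u : (forall k, (k < K)%N -> m1 k = m2 k) ->
  lincomb m1 K u = lincomb m2 K u.
Proof. by move=> h; apply: eq_big_nat => k /andP[_ kK]; rewrite h. Qed.

Lemma lincomb_bounded_finite m K L : exists l : seq M, forall u,
  (forall k, (k < K)%N -> N (u k) <= L) -> lincomb m K u \in l.
Proof.
elim: K => [|K [l hl]]; first by exists [:: 0] => u _; rewrite lincomb0 inE.
exists [seq a + r *: m K | a <- l, r <- ball_seq N L] => u hu.
rewrite lincombS; apply: allpairs_f; first by apply: hl => k kK; apply/hu/ltnW.
exact/(ball_seqP hND)/hu.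
Qed.

(* R being countable, so is the span of finitely many vectors. *)
Lemma lincomb_countable m K : countable_set (fun y => exists w, lincomb m K w = y).
Proof.
elim: K => [|K [g hg]].
  by exists (fun _ => 0) => y [w <-]; exists 0%N; rewrite lincomb0.
apply: (countable_image2 (f := fun i j => g i + ring_enum N j *: m K)) => _ [w <-].
have [i hi] := hg (lincomb m K w) (ex_intro _ w erefl).
have [j hj] := ring_enum_surj hND (w K).
by exists i, j; rewrite hi hj lincombS.
Qed.

Lemma separation_constant m K : exists2 e : Real, 0 < e &
  forall u u', bounded_coefs K u -> bounded_coefs K u' ->
    lincomb m K u != lincomb m K u' -> 5 * e < d (lincomb m K u) (lincomb m K u').
Proof.
have [l hl] := lincomb_bounded_finite m K (coef_bound K).
have [e e0 he] : exists2 e : Real, 0 < e & forall ab, ab \in [seq (a, b) | a <- l, b <- l] ->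
    ab.1 != ab.2 -> 5 * e < d ab.1 ab.2.
  apply: finite_small_pos => [ab a b ha b0 ba ne|[a b] _ /=].
    by apply: le_lt_trans (ha ne); rewrite ler_pM2l.
  case: (eqVneq a b) => [->|ne]; first by exists 1; rewrite ?eqxx.
  have dab : 0 < d a b.
    rewrite lt_neqAle (dist_ge0 hM) andbT eq_sym.
    by apply: contra ne => /eqP /(dist_eq0 hM) ->.
  by exists (d a b / 10) => [|_]; [exact: divr_gt0 | lra].
exists e => // u u' bu bu'; apply: (he (_, _)).
by apply: allpairs_f; apply: hl.
Qed.

(* Perturbing a K-bounded sum by r x, with N(r) <= K K! and x near 0, moves
   it by less than eps: continuity at finitely many points. *)
Lemma perturbation_radius m K (eps : Real) : 0 < eps -> exists2 del : Real, 0 < del &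
  forall u r x, bounded_coefs K u -> N r <= coef_bound K -> d 0 x < del ->
    d (lincomb m K u + r *: x) (lincomb m K u) < eps.
Proof.
move=> eps0; have [l hl] := lincomb_bounded_finite m K (coef_bound K).
have [del del0 hdel] : exists2 del : Real, 0 < del &
    forall ar, ar \in [seq (a, r) | a <- l, r <- ball_seq N (coef_bound K)] ->
    forall x, d 0 x < del -> d (ar.1 + ar.2 *: x) ar.1 < eps.
  apply: finite_small_pos => [ar a b ha b0 ba x hx|[a r] _ /=].
    by apply: ha; exact: lt_le_trans hx ba.
  case: hM => _ _ _ hadd hscale.
  have [d1 d10 hd1] := hadd a 0 eps eps0.
  have [d2 d20 hd2] := hscale r 0 d1 d10.
  exists d2 => // x hx; rewrite (dist_sym hM).
  have := hd1 a (r *: x); rewrite addr0; apply; first by rewrite (dist_xx hM).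
  by have := hd2 r x; rewrite scaler0 subrr (norm0 hN); exact.
exists del => // u r x bu hr hx; apply: (hdel (_, _)) hx.
by apply: allpairs_f; [exact: hl | exact: (ball_seqP hND)].
Qed.

(* Some x in M[P] arbitrarily close to 0 is independent from the K-bounded
   span modulo P: the x with S_K(w) + r x = 0 for some w and r notin P lie
   in countably many countable fibres. *)
Lemma independent_direction m K (del : Real) : 0 < del -> exists x,
  [/\ ann P x, d 0 x < del & forall w r, ~ P r -> lincomb m K w + r *: x != 0].
Proof.
move=> del0; apply: NNPP => nox.
apply: (subgroup_small_uncountable hM _ P_unc del0).
  by move=> x y hx hy a Pa; rewrite scalerBr hx // hy // subrr.
have [g hg] := lincomb_countable m K.
pose fiber (q : nat * nat) x :=
  ~ P (ring_enum N q.1) /\ ann P x /\ ring_enum N q.1 *: x = - g q.2.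
apply: (countable_bigcup (0, 0)%N (B := fiber)) => [q|x [Px dx]].
  case: (classic (P (ring_enum N q.1))) => [Pq|nPq].
    by exists (fun _ => 0) => x [].
  by apply: (countable_set_sub _ (fiber_countable (- g q.2) nPq)) => x [].
have [w [r [nPr /eqP hr]]] : exists w r, ~ P r /\ lincomb m K w + r *: x = 0.
  apply: NNPP => H; apply: nox; exists x; split => // w r nPr; apply/eqP => h.
  by apply: H; exists w, r.
have [i hi] := hg (lincomb m K w) (ex_intro _ w erefl).
have [p hp] := ring_enum_surj hND r.
exists (p, i); rewrite /fiber /= hp hi; split => //; split => //.
by apply/eqP; rewrite -addr_eq0 addrC hr.
Qed.

Record good_step (m : nat -> M) (K : nat) (prev : Real) (x : M) (eps : Real) : Prop :=
  GoodStep {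
    step_pos : 0 < eps;
    step_half : eps <= prev / 2;
    step_sep : forall u u', bounded_coefs K u -> bounded_coefs K u' ->
      lincomb m K u != lincomb m K u' -> 5 * eps < d (lincomb m K u) (lincomb m K u');
    step_ann : ann P x;
    step_near : forall u r, bounded_coefs K u -> N r <= coef_bound K ->
      d (lincomb m K u + r *: x) (lincomb m K u) < eps;
    step_indep : forall w r, ~ P r -> lincomb m K w + r *: x != 0 }.

Lemma good_step_exists m K prev : 0 < prev -> exists q, good_step m K prev q.1 q.2.
Proof.
move=> prev0; have [e1 e10 he1] := separation_constant m K.
set eps := Num.min e1 (prev / 2).
have eps0 : 0 < eps by rewrite lt_min e10 divr_gt0.
have [del del0 hdel] := perturbation_radius m K eps0.
have [x [Px dx indep]] := independent_direction m K del0.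
exists (x, eps); split => //=; first by rewrite ge_min lexx orbT.
  move=> u u' bu bu' ne; apply: le_lt_trans (he1 _ _ bu bu' ne).
  by rewrite ler_pM2l ?ge_min ?lexx.
by move=> u r bu hr; exact: hdel.
Qed.

(* Recursive choice of the steps: [build K i] is the i-th step, for i < K. *)
Definition choose_step m K prev : M * Real :=
  epsilon (inhabits (0 : M, 1 : Real)) (fun q => good_step m K prev q.1 q.2).

Fixpoint build K : nat -> M * Real :=
  if K is K'.+1 then
    let b := build K' in
    let q := choose_step (fun i => (b i).1) K' (b K'.-1).2 in
    fun i => if i == K' then q else b i
  else fun _ => (0, 1).

Lemma build_stable K i : (i < K)%N -> build K i = build i.+1 i.
Proof.
elim: K => // K IH; rewrite ltnS leq_eqVlt => /orP[/eqP->//|iK].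
by rewrite /= (ltn_eqF iK); apply: IH.
Qed.

Lemma build_good K : good_step (fun i => (build K i).1) K (build K K.-1).2
  (build K.+1 K).1 (build K.+1 K).2.
Proof.
elim/ltn_ind: K => K IH; rewrite /= eqxx.
apply: (epsilon_spec (inhabits (0 : M, 1 : Real))
  (fun q => good_step (fun i => (build K i).1) K (build K K.-1).2 q.1 q.2)).
apply: good_step_exists; case: K IH => [_|K IH]; first exact: ltr01.
exact: (step_pos (IH K (ltnSn K))).
Qed.

Lemma good_sequence_exists : exists (m : nat -> M) (e : nat -> Real),
  forall K, good_step m K (if K is K'.+1 then e K' else 1) (m K) (e K).
Proof.
exists (fun i => (build i.+1 i).1), (fun i => (build i.+1 i).2) => K.
have [pos half sep Pann near indep] := build_good K.
have prevE : (build K K.-1).2 = if K is K'.+1 then (build K'.+1 K').2 else 1.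
  by case: K {pos half sep Pann near indep}.
have E : lincomb (fun i => (build K i).1) K = lincomb (fun i => (build i.+1 i).1) K.
  by apply: functional_extensionality => u; apply: lincomb_ext => k /build_stable ->.
by split; rewrite -?E -?prevE.
Qed.

(** The limit map.  Along a good sequence, S_K(u) is Cauchy whenever
    N(u_k) <= c k! (the K-th increment is below eps_K once K >= c), and its
    limit stays within 2 eps_n of S_n(u). *)
Section Embedding.
Variables (m : nat -> M) (e : nat -> Real).
Hypothesis m_good : forall K, good_step m K (if K is K'.+1 then e K' else 1) (m K) (e K).

Lemma e_pos K : 0 < e K. Proof. exact: step_pos (m_good K). Qed.

Lemma e_mono k n : (k <= n)%N -> e n <= e k.
Proof.
move=> /subnKC <-; elim: (n - k)%N => [|j IH]; first by rewrite addn0.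
rewrite addnS; apply: le_trans (step_half (m_good _)) _; apply: le_trans IH.
by have := e_pos (k + j); lra.
Qed.

Lemma e_small eta : 0 < eta -> exists n, e n < eta.
Proof.
move=> eta0.
have geom n : e n <= e 0 / (2 ^+ n).
  elim: n => [|n IH]; first by rewrite expr0 divr1.
  apply: le_trans (step_half (m_good n.+1)) _; rewrite exprS invfM.
  suff -> : e 0 * (2^-1 / 2 ^+ n) = e 0 / 2 ^+ n / 2 by rewrite ler_pM2r ?invr_gt0.
  by ring.
set n := Num.Def.archi_bound (e 0 / eta).
have hn : e 0 / eta < n%:R by apply: archi_boundP; rewrite divr_ge0 // ltW // e_pos.
exists n; apply: le_lt_trans (geom n) _.
have p2 : 0 < (2 ^+ n : Real) by rewrite exprn_gt0.
rewrite ltr_pdivrMr //; rewrite ltr_pdivrMr // in hn.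
apply: lt_le_trans hn _; rewrite mulrC ler_pM2l // -natrX ler_nat.
exact/ltnW/ltn_expl.
Qed.

Definition fact_growth (c : nat) (u : nat -> R) := forall k, N (u k) <= c%:R * (k`!)%:R.

Lemma fact_growth_bounded c u K : fact_growth c u -> (c <= K)%N ->
  bounded_coefs K u /\ N (u K) <= coef_bound K.
Proof.
move=> gu cK; suff H k : (k <= K)%N -> N (u k) <= coef_bound K.
  by split => [k /ltnW|]; apply: H.
move=> kK; apply: le_trans (gu k) _; rewrite /coef_bound -natrM ler_nat.
by apply: leq_mul => //; apply: fact_mono.
Qed.

Lemma lincomb_tail c u n K : fact_growth c u -> (c <= n)%N -> (n <= K)%N ->
  d (lincomb m K u) (lincomb m n u) <= 2 * e n.
Proof.
move=> gu cn /subnKC <-.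
suff tail j : d (lincomb m (n + j) u) (lincomb m n u) <= 2 * e n - 2 * e (n + j).
  by apply: le_trans (tail _) _; have := e_pos (n + (K - n)); lra.
elim: j => [|j IH]; first by rewrite addn0 (dist_xx hM) subrr.
have [bu buK] := fact_growth_bounded gu (leq_trans cn (leq_addr j n)).
have step := step_near (m_good (n + j)) bu buK.
have half := step_half (m_good (n + j).+1).
rewrite addnS lincombS; apply: le_trans (dist_tri hM _ (lincomb m (n + j) u) _) _.
lra.
Qed.

Definition converges (x : nat -> M) (X : M) := forall eta : Real, 0 < eta ->
  exists K, forall n, (K <= n)%N -> d (x n) X < eta.

Lemma lincomb_converges c u : fact_growth c u -> exists X, converges (lincomb m ^~ u) X.
Proof.
move=> gu; case: hM => _ complete _ _ _; apply: complete => eta eta0.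
have [n0 hn0] := e_small (divr_gt0 eta0 (ltr0n _ 4)).
exists (maxn c n0) => p q hp hq.
have c1 : (c <= maxn c n0)%N := leq_maxl _ _.
have h1 := lincomb_tail gu c1 hp; have h2 := lincomb_tail gu c1 hq.
have h3 := e_mono (leq_maxr c n0).
apply: le_lt_trans (dist_tri hM _ (lincomb m (maxn c n0) u) _) _.
by rewrite [d (lincomb m _ u) (lincomb m q u)](dist_sym hM); lra.
Qed.

Lemma limit_near c u X : fact_growth c u -> converges (lincomb m ^~ u) X ->
  forall n, (c <= n)%N -> d X (lincomb m n u) <= 2 * e n.
Proof.
move=> gu cv n cn; apply: le_add_eps => eta eta0.
have [K hK] := cv eta eta0.
have h1 := hK (maxn K n) (leq_maxl _ _).
have h2 := lincomb_tail gu cn (leq_maxr K n).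
apply: le_trans (dist_tri hM X (lincomb m (maxn K n) u) _) _.
by rewrite (dist_sym hM X); lra.
Qed.

Lemma converges_unique x X Y : converges x X -> converges x Y -> X = Y.
Proof.
move=> hX hY; apply: (dist_eq0 hM); apply/eqP; rewrite eq_le (dist_ge0 hM) andbT.
apply: le_add_eps => eta eta0; rewrite add0r.
have [K1 h1] := hX (eta / 2) (divr_gt0 eta0 (ltr0n _ 2)).
have [K2 h2] := hY (eta / 2) (divr_gt0 eta0 (ltr0n _ 2)).
have a1 := h1 (maxn K1 K2) (leq_maxl _ _); have a2 := h2 (maxn K1 K2) (leq_maxr _ _).
apply: le_trans (dist_tri hM X (x (maxn K1 K2)) Y) _.
by rewrite (dist_sym hM X); lra.
Qed.

Lemma converges_ext x y X : (forall n, x n = y n) -> converges x X -> converges y X.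
Proof. by move=> h cv eta /cv [K hK]; exists K => n /hK; rewrite h. Qed.

Lemma converges_lin r x y X Y : converges x X -> converges y Y ->
  converges (fun n => r *: x n + y n) (r *: X + Y).
Proof.
move=> hX hY eta eta0; case: hM => _ _ _ hadd hscale.
have [d1 d10 hd1] := hadd (r *: X) Y eta eta0.
have [d2 d20 hd2] := hscale r X d1 d10.
have [K1 h1] := hX d2 d20; have [K2 h2] := hY d1 d10.
exists (maxn K1 K2) => n hn.
have a1 : d X (x n) < d2 by rewrite (dist_sym hM); apply/h1/(leq_trans (leq_maxl _ _) hn).
have a2 : d Y (y n) < d1 by rewrite (dist_sym hM); apply/h2/(leq_trans (leq_maxr _ _) hn).
rewrite (dist_sym hM); apply: hd1 a2; apply: hd2 a1.
by rewrite subrr (norm0 hN).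
Qed.

(** Finite sums: linearity, dependence only on coefficients modulo P (as
    m_k in M[P]), and independence modulo P (by the choice of m_K). *)

Lemma lincomb_congr K u v : (forall k, (k < K)%N -> P (u k - v k)) ->
  lincomb m K u = lincomb m K v.
Proof.
move=> h; apply: eq_big_nat => k /andP[_ kK]; apply/eqP.
by rewrite -subr_eq0 -scalerBl (step_ann (m_good k)) //; exact: h.
Qed.

Lemma lincombB K u v : lincomb m K (fun k => u k - v k) = lincomb m K u - lincomb m K v.
Proof. by rewrite /lincomb -sumrB; apply: eq_bigr => k _; rewrite scalerBl. Qed.

Lemma lincomb_linear K r u v :
  lincomb m K (fun k => r * u k + v k) = r *: lincomb m K u + lincomb m K v.
Proof.
rewrite /lincomb scaler_sumr -big_split; apply: eq_bigr => k _.
by rewrite scalerDl scalerA.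
Qed.

Lemma lincomb_indep K w : lincomb m K w = 0 -> forall k, (k < K)%N -> P (w k).
Proof.
elim: K => // K IH; rewrite lincombS => h k.
case: (classic (P (w K))) => PK; last first.
  by move/eqP: h; rewrite (negbTE (step_indep (m_good K) _ PK)).
move: h; rewrite (step_ann (m_good K)) // addr0 => /IH h'.
by rewrite ltnS leq_eqVlt => /orP[/eqP->//|]; apply: h'.
Qed.

(* Two sums of factorial growth with the same limit agree from step c on:
   otherwise they would be 5 eps_n apart, yet both 2 eps_n-close to it. *)
Lemma lincomb_eq_of_limit c u v X : fact_growth c u -> fact_growth c v ->
  converges (lincomb m ^~ u) X -> converges (lincomb m ^~ v) X ->
  forall n, (c <= n)%N -> lincomb m n u = lincomb m n v.
Proof.
move=> gu gv cu cv n cn; apply: NNPP => /eqP ne.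
have sep := step_sep (m_good n) (fact_growth_bounded gu cn).1
  (fact_growth_bounded gv cn).1 ne.
have h1 := limit_near gu cu cn; have h2 := limit_near gv cv cn.
have := dist_tri hM (lincomb m n u) X (lincomb m n v).
by rewrite (dist_sym hM _ X); have := e_pos n; lra.
Qed.

Definition limit (u : nat -> R) : M :=
  epsilon (inhabits (0 : M)) (converges (lincomb m ^~ u)).

Lemma limitP c u : fact_growth c u -> converges (lincomb m ^~ u) (limit u).
Proof. by move=> gu; apply: epsilon_spec; exact: lincomb_converges gu. Qed.

Lemma limit_eq u X : converges (lincomb m ^~ u) X -> limit u = X.
Proof.
move=> cu; apply: (converges_unique _ cu).
by apply: epsilon_spec; exists X.
Qed.

Notation rep := (min_rep N P).
Definition embed (s : nat -> R) : M := limit (fun k => rep (s k)).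

Lemma min_rep_growth s : in_l1 N P s -> exists c, fact_growth c (fun k => rep (s k)).
Proof.
move=> /(l1_coef_bound hND hP) [c hc].
by exists c => k; rewrite (min_repP hND hP (s k)).2.
Qed.

Lemma embedP s : in_l1 N P s ->
  converges (lincomb m ^~ (fun k => rep (s k))) (embed s).
Proof. by move=> /min_rep_growth [c hc]; exact: limitP hc. Qed.

Lemma embed_linear r s t : in_l1 N P s -> in_l1 N P t ->
  embed (fun k => r * s k + t k) = r *: embed s + embed t.
Proof.
move=> hs ht; apply: limit_eq.
apply: (converges_ext (x := fun K => r *: lincomb m K (fun k => rep (s k))
  + lincomb m K (fun k => rep (t k)))); last exact: converges_lin (embedP hs) (embedP ht).
move=> K; rewrite -lincomb_linear; apply: lincomb_congr => k _.
have [hrs _] := min_repP hND hP (s k); have [hrt _] := min_repP hND hP (t k).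
have [hrst _] := min_repP hND hP (r * s k + t k).
have -> : r * rep (s k) + rep (t k) - rep (r * s k + t k) =
  r * (rep (s k) - s k) + (rep (t k) - t k) - (rep (r * s k + t k) - (r * s k + t k)) by ring.
by apply: (idealB hP) => //; apply: (idealD hP) => //; exact: idealMl.
Qed.

Lemma embed_congr s t : in_l1 N P t -> eqmod_seq P s t -> embed s = embed t.
Proof.
move=> ht hst; apply: limit_eq; apply: converges_ext (embedP ht) => K.
by apply: lincomb_congr => k _; apply: (min_rep_modP hND hP); rewrite -opprB; exact: idealN.
Qed.

Lemma embed_injective s t : in_l1 N P s -> in_l1 N P t -> embed s = embed t ->
  eqmod_seq P s t.
Proof.
move=> hs ht st j.
have [cs gs] := min_rep_growth hs; have [ct gt] := min_rep_growth ht.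
set c := maxn cs ct.
have growth (u : nat -> R) c' : (c' <= c)%N -> fact_growth c' u -> fact_growth c u.
  move=> le gu k; apply: le_trans (gu k) _.
  by rewrite ler_wpM2r ?ler0n // ler_nat.
have ts := embedP ht; rewrite -st in ts.
have Seq := lincomb_eq_of_limit (growth _ _ (leq_maxl _ _) gs) (growth _ _ (leq_maxr _ _) gt)
  (embedP hs) ts (leq_maxl c j.+1).
have Prep : P (rep (s j) - rep (t j)).
  apply: (lincomb_indep (w := fun k => rep (s k) - rep (t k))) (leq_maxr c j.+1).
  by rewrite lincombB Seq subrr.
have [hrs _] := min_repP hND hP (s j); have [hrt _] := min_repP hND hP (t j).
have -> : s j - t j = (rep (s j) - rep (t j)) - (rep (s j) - s j) + (rep (t j) - t j) by ring.
by apply: (idealD hP) => //; exact: idealB.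
Qed.

(* If t is l^1-close to s then the first n coefficients agree modulo P
   (quotient norms below the gap vanish) and t has factorial growth with a
   constant one larger than s; hence both limits are 2 eps_n-close to the
   same S_n. *)
Lemma embed_continuous s : in_l1 N P s -> forall eta : Real, 0 < eta ->
  exists2 delta : Real, 0 < delta & forall t, in_l1 N P t ->
    l1_dist N P s t < delta -> d (embed s) (embed t) < eta.
Proof.
move=> hs eta eta0.
have [gap gap0 hgap] := quot_norm_gap hND hP.
have [cs bs] := l1_coef_bound hND hP hs.
have [n0 hn0] := e_small (divr_gt0 eta0 (ltr0n _ 4)).
set c := cs.+1; set n := maxn c n0.
have cn : (c <= n)%N := leq_maxl _ _.
have en := e_mono (leq_maxr c n0 : (n0 <= n)%N).
have delta0 : 0 < Num.min 1 (gap / (n`!)%:R) by rewrite lt_min ltr01 divr_gt0 ?fact_gt0R.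
exists (Num.min 1 (gap / (n`!)%:R)) => // t ht dist_st.
have close k : quot_norm N P (s k - t k) / (k`!)%:R < Num.min 1 (gap / (n`!)%:R).
  apply: le_lt_trans dist_st.
  exact: term_le_series_sum (l1_weight_ge0 hND hP _) (l1_sub hND hP hs ht) k.
have gt : fact_growth c (fun k => rep (t k)).
  move=> k; rewrite (min_repP hND hP (t k)).2.
  have -> : t k = s k + - (s k - t k) by ring.
  apply: le_trans (quot_normD hND hP _ _) _; rewrite (quot_normN hND hP).
  have := close k; rewrite lt_min => /andP[+ _]; rewrite ltr_pdivrMr ?fact_gt0R // mul1r.
  by have := bs k; rewrite /c -addn1 natrD mulrDl mul1r; lra.
have gs : fact_growth c (fun k => rep (s k)).
  move=> k; rewrite (min_repP hND hP (s k)).2; apply: le_trans (bs k) _.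
  by rewrite ler_wpM2r ?ler0n // ler_nat /c.
have Seq : lincomb m n (fun k => rep (s k)) = lincomb m n (fun k => rep (t k)).
  apply: lincomb_congr => k kn; apply: (min_rep_modP hND hP); apply: NNPP => nP.
  have := hgap _ nP; have := close k; rewrite lt_min => /andP[_].
  have fkn : ((k`!)%:R : Real) <= (n`!)%:R by rewrite ler_nat fact_mono // ltnW.
  rewrite ltr_pdivrMr ?fact_gt0R //.
  have : gap / (n`!)%:R * (k`!)%:R <= gap.
    by rewrite mulrAC ler_pdivrMr ?fact_gt0R // ler_pM2l.
  lra.
have h1 := limit_near gs (embedP hs) cn; have h2 := limit_near gt (embedP ht) cn.
rewrite -Seq in h2.
have := dist_tri hM (embed s) (lincomb m n (fun k => rep (s k))) (embed t).
by rewrite (dist_sym hM (lincomb m n _) (embed t)); lra.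
Qed.

End Embedding.

Lemma l1_embeds_polish : l1_embeds N P (fun _ : M => True) (@eq M) +%R ( *:%R) d.
Proof.
have [m [e m_good]] := good_sequence_exists.
exists (embed m); split => // [r s t hs ht|s t hs ht|s hs].
- exact: embed_linear.
- by split; [exact: embed_injective | exact: embed_congr].
- exact: embed_continuous.
Qed.

End Construction.

Theorem theorem4p1 (R : idomainType) (N : R -> Real)
  (hN : is_norm N) (hprop : norm_proper N) (hdisc : norm_discrete N)
  (hpid : is_principal_ideal_domain R)
  (M : lmodType R) (d : M -> M -> Real) (hM : polish_module N d) :
  ((countable_type M \/
    exists P : R -> Prop, is_prime_ideal P /\
      l1_embeds N P (fun _ : M => True) (@eq M) +%R ( *:%R) d)
   /\
   ~ (countable_type M /\
      exists P : R -> Prop, is_prime_ideal P /\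
        l1_embeds N P (fun _ : M => True) (@eq M) +%R ( *:%R) d))
  /\
  (forall P Q : R -> Prop, is_prime_ideal P -> is_prime_ideal Q ->
     ~ (forall x, P x <-> Q x) -> ~ l1_embeds_l1 N P Q).
Proof.
have hND : proper_discrete_norm N by split.
split; last first.
  move=> P Q [hP nP1 _] [hQ _ Qprime] PneQ [f [_ f_lin f_inj _]]; apply: PneQ => x.
  split; first exact: (embedding_ideal_sup hND hP hQ f_lin f_inj nP1 Qprime).
  exact: (embedding_ideal_sub hND hP hQ f_lin f_inj).
split; last first.
  by move=> [Mc [P [[hP nP1 _] emb]]]; exact: (l1_embeds_uncountable hND hP nP1 emb).
case: (classic (countable_type M)) => Mc; [by left | right].
have Munc : ~ countable_set (fun _ : M => True).
  by move=> [g hg]; apply: Mc; exists g => x; exact: hg.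
have [P Pmax] := maximal_big_ann_exists hpid Munc.
have Pprime := maximal_big_ann_prime Pmax.
exists P; split => //; apply: (l1_embeds_polish hND hM).
- by case: Pprime.
- by case: Pmax => -[].
- by move=> r y nPr; apply/ann_fiber_countable/(maximal_big_ann_sum Pmax).
Qed.
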